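(* Let $u\in V$ be quasiprimary of weight $N\ge1$, let $f_0(x),\dots,f_{2N-2}(x)$ be arbitrary Laurent series, and put $\psi^{(0)}_N(x,y)=\frac1{x-y}+\sum_{\ell=0}^{2N-2}f_\ell(x)y^\ell$. Then for all $v_1,\dots,v_n\in V$, \[ Z^{(0)}(u,x;v_1,y_1;\dots;v_n,y_n)=\sum_{k=1}^n\sum_{j\ge0}\partial^{(0,j)}\psi^{(0)}_N(x,y_k)\,Z^{(0)}(v_1,y_1;\dots;u(j)v_k,y_k;\dots;v_n,y_n). \]
   Context: $V=\bigoplus_{n\ge0}V_n$ is a simple, self-dual vertex operator algebra (VOA) of strong CFT type ($V_0=\mathbb C\mathbb 1$, $L(1)V_1=0$), with vertex operators $Y(u,z)=\sum_{n\in\mathbb Z}u(n)z^{-n-1}$, Virasoro modes $L(n)$, and $\mathrm{wt}(v)=n$ for $v\in V_n$. A vector $u$ is quasiprimary if $L(1)u=0$. $\langle\cdot,\cdot\rangle$ is the unique invariant nondegenerate bilinear form on $V$ (Li–Zamolodchikov metric) with $\langle\mathbb 1,\mathbb 1\rangle=1$, invariant meaning $\langle Y(u,z)v,w\rangle=\langle v,Y(e^{zL(1)}(-z^{-2})^{L(0)}u,1/z)w\rangle$. The genus zero $n$-point function is $Z^{(0)}(v_1,y_1;\dots;v_n,y_n)=\langle \mathbb 1,Y(v_1,y_1)\cdots Y(v_n,y_n)\mathbb 1\rangle$. Notation: $\partial^{(j)}_y=\frac1{j!}\partial_y^j$ and $\partial^{(i,j)}F(x,y)=\partial_x^{(i)}\partial_y^{(j)}F(x,y)$;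 negative powers of binomials such as $\frac1{x-y}$ are expanded using $(x+y)^m=\sum_{k\ge0}\binom mk x^{m-k}y^k$. *)

(* Abstract vertex operator algebras over a numeric closed
   field K (the abstract stand-in for C), formalised via modes u(n). *)
From HB Require Import structures.
From mathcomp Require Import all_boot all_order all_algebra.
Set Implicit Arguments. Unset Strict Implicit. Unset Printing Implicit Defensive.
Import Order.TTheory GRing.Theory Num.Theory.
Local Open Scope ring_scope.

Definition binz {K : fieldType} (r : int) (i : nat) : K :=
  (\prod_(j < i) (r%:~R - j%:R)) / (i`!)%:R.

(* A vertex operator algebra, in mode form: Y u n v = u(n) v,
   i.e. Y(u,z) v = \sum_n u(n) v z^{-n-1}.  L(n) = omega(n+1).
   The grading is V = (+)_{n >= 0} V_n with V_n the L(0)-eigenspace of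
   eigenvalue n (strong CFT type: only n >= 0 occurs, V_0 = K 1, L(1)V_1 = 0). *)
Record VOA (K : numClosedFieldType) (V : lmodType K) := {
  Y : V -> int -> V -> V;
  vac : V;
  omega : V;
  cc : K;
  Y_linl : forall (a : K) u u' n w, Y (a *: u + u') n w = a *: Y u n w + Y u' n w;
  Y_linr : forall u n (a : K) w w', Y u n (a *: w + w') = a *: Y u n w + Y u n w';
  Y_trunc : forall u v, exists T : int, forall n : int, T <= n -> Y u n v = 0;
  Y_vac : forall n v, Y vac n v = (if n == -1 then v else 0);
  Y_create : forall u (n : int), 0 <= n -> Y u n vac = 0;
  Y_create1 : forall u, Y u (-1) vac = u;
  (* Borcherds (Jacobi) identity in modes; M is any bound beyond which all
     the (finitely many nonzero) summands vanish *)
  Borcherds : forall u v w (p q r : int) (M : nat),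
     (forall i : nat, (M <= i)%N ->
        [/\ Y u (r + i%:Z) v = 0, Y v (q + i%:Z) w = 0 & Y u (p + i%:Z) w = 0]) ->
     \sum_(i < M) binz p i *: Y (Y u (r + i%:Z) v) (p + q - i%:Z) w =
     \sum_(i < M) ((-1) ^+ i * binz r i) *:
        (Y u (p + r - i%:Z) (Y v (q + i%:Z) w)
         - ((-1) ^ r) *: Y v (q + r - i%:Z) (Y u (p + i%:Z) w));
  Virasoro : forall (m n : int) v,
     Y omega (m + 1) (Y omega (n + 1) v) - Y omega (n + 1) (Y omega (m + 1) v) =
     (m - n)%:~R *: Y omega (m + n + 1) v
     + ((if m + n == 0 then (m ^+ 3 - m)%:~R / 12%:R else 0) * cc) *: v;
  (* Y(L(-1)u, z) = d/dz Y(u, z) *)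
  L_deriv : forall u (n : int) v, Y (Y omega 0 u) n v = - (n%:~R) *: Y u (n - 1) v;
  omega_wt : Y omega 1 omega = 2%:R *: omega;
  grading : forall v, exists s : seq (nat * V),
     v = \sum_(p <- s) p.2 /\ (forall p, p \in s -> Y omega 1 p.2 = (p.1)%:R *: p.2);
  fin_dim : forall n : nat, exists s : seq V, forall v, Y omega 1 v = n%:R *: v ->
     exists c : 'I_(size s) -> K, v = \sum_(i < size s) c i *: s`_i;
  V0_vac : forall v, Y omega 1 v = 0 -> exists a : K, v = a *: vac;
  L1_V1 : forall v, Y omega 1 v = v -> Y omega 2 v = 0
}.

Section VOADefs.
Variables (K : numClosedFieldType) (V : lmodType K) (W : VOA V).

Definition L (n : int) : V -> V := Y W (omega W) (n + 1).

Definition is_wt (v : V) (k : nat) : Prop := L 0 v = k%:R *: v.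

Definition quasiprimary (u : V) : Prop := L 1 u = 0.

Definition is_ideal (I : V -> Prop) : Prop :=
  [/\ I 0, (forall (a : K) x y, I x -> I y -> I (a *: x + y))
   & (forall u n w, I w -> I (Y W u n w) /\ I (Y W w n u))].

Definition simpleVOA : Prop :=
  forall I, is_ideal I -> (forall v, I v -> v = 0) \/ (forall v, I v).

(* Invariance <Y(u,z)v,w> = <v, Y(e^{zL(1)}(-z^{-2})^{L(0)}u, 1/z) w>, read off
   coefficientwise for homogeneous u of weight k:
   <u(n)v, w> = (-1)^k \sum_{m>=0} 1/m! <v, (L(1)^m u)(2k-m-n-2) w>. *)
Definition LZ_form (B : V -> V -> K) : Prop :=
  [/\ (forall (a : K) x x' y, B (a *: x + x') y = a * B x y + B x' y),
      (forall (a : K) x y y', B x (a *: y + y') = a * B x y + B x y'),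
      (forall x, (forall y, B x y = 0) -> x = 0) /\
      (forall y, (forall x, B x y = 0) -> y = 0),
      B (vac W) (vac W) = 1
    & (forall u k, is_wt u k -> forall (n : int) v w,
        B (Y W u n v) w =
        (-1) ^+ k * \sum_(m < k.+1)
           (m`!)%:R^-1 * B v (Y W (iter m (L 1) u) ((2 * k)%:Z - m%:Z - n - 2) w))].

(* Coefficient of y_1^{a_1} ... y_r^{a_r} in the genus zero correlation function
   <1, Y(v_1,y_1) ... Y(v_r,y_r) 1>, for s = [:: (v_1,a_1); ...; (v_r,a_r)]:
   equals <1, v_1(-a_1-1) ... v_r(-a_r-1) 1>. *)
Definition corr (B : V -> V -> K) (s : seq (V * int)) : K :=
  B (vac W) (foldr (fun p acc => Y W p.1 (- p.2 - 1) acc) (vac W) s).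

End VOADefs.

(* Coefficient of x^a y^c in psi_N^{(0)}(x,y) = 1/(x-y) + \sum_{l=0}^{2N-2} f_l(x) y^l,
   with 1/(x-y) = \sum_{m>=0} x^{-m-1} y^m and f l a = coefficient of x^a in f_l. *)
Definition psi_coef {K : fieldType} (N : nat) (f : nat -> int -> K) (a c : int) : K :=
  (if (0 <= c) && (a == - c - 1) then 1 else 0)
  + (if (0 <= c) && (c <= (2 * N)%:Z - 2) then f (absz c) a else 0).

(* Coefficient of x^a y^c in d^{(0,j)} psi_N^{(0)}(x,y);
   d^{(j)}_y y^m = binom(m,j) y^{m-j}. *)
Definition dpsi_coef {K : fieldType} (N : nat) (f : nat -> int -> K) (j : nat) (a c : int) : K :=
  binz (c + j%:Z) j * psi_coef N f a (c + j%:Z).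

From HB Require Import structures.
From mathcomp Require Import all_boot all_order all_algebra.
From mathcomp Require Import zify.
Import Order.TTheory GRing.Theory Num.Theory.
Local Open Scope ring_scope.

(* Take the coefficient of x^a y_1^b_1 ... y_n^b_n.  The left side is
   <1, u(-a-1) v_1(-b_1-1) ... v_n(-b_n-1) 1>.  On the right, shifting the
   summation index to l = c + j turns the x^a-coefficient of d^(0,j) psi into
   binom(l, j) times the coefficient psi_l(a) = [a = -l-1] + [l <= 2N-2] f_l(a)
   of y^l in psi, and for each l the sum over k and j is exactly the expansion of
   <1, u(l) v_1(..) ... v_n(..) 1> given by the commutator formula
   u(l) v(m) = v(m) u(l) + sum_j binom(l, j) (u(j) v)(l + m - j) and u(l) 1 = 0.
   Invariance of the form makes <1, u(l) w> vanish for l <= 2N-2 when u is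
   quasiprimary of weight N; this kills every f_l term, and also the left side
   when a >= 0.  What remains is the single term l = -a-1, the left side. *)

Lemma binz0 {K : fieldType} (r : int) : binz r 0 = 1 :> K.
Proof. by rewrite /binz big_ord0 fact0 divr1. Qed.

Lemma binz_small {K : fieldType} (m j : nat) : (m < j)%N -> binz m%:Z j = 0 :> K.
Proof.
by move=> lt_mj; rewrite /binz (bigD1 (Ordinal lt_mj)) //= subrr !mul0r.
Qed.

Lemma sum_ord_shift (R : zmodType) (A j : nat) (H : nat -> nat -> R) :
  (forall l c, (A <= l)%N -> H l c = 0) ->
  \sum_(c < A) H (c + j)%N c = \sum_(l < A) (if (j <= l)%N then H l (l - j)%N else 0).
Proof.
move=> H_out; rewrite -(big_mkord xpredT (fun c => H (c + j)%N c)).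
rewrite -(big_mkord xpredT (fun l => if (j <= l)%N then H l (l - j)%N else 0)); symmetry.
rewrite (big_nat_widen _ _ _ _ _ (leq_addr j A)) (@big_cat_nat _ _ _ j) ?leq_addl //=.
rewrite [X in X + _]big_nat_cond [X in X + _]big1 ?add0r; last first.
  by move=> l /andP[/andP[_ lt_lj] _]; rewrite leqNgt lt_lj.
rewrite -{1}[j]add0n big_addn addnK big_mkcond; apply: eq_big_nat => c _.
by rewrite leq_addl addnK; case: ltnP => // /H_out ->.
Qed.

Lemma nth_map_enum_ord {T : Type} (x0 : T) (n : nat) (F : 'I_n -> T) (i : 'I_n) :
  nth x0 [seq F j | j <- enum 'I_n] i = F i.
Proof. by rewrite (nth_map i) ?size_enum_ord // nth_ord_enum. Qed.

Lemma map_enum_ord_set_nth {T : Type} (x0 : T) (n : nat) (g h : 'I_n -> T) (k : 'I_n) :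
  [seq (if i == k then g i else h i) | i <- enum 'I_n] =
  set_nth x0 [seq h i | i <- enum 'I_n] k (g k).
Proof.
have size_map_enum (F : 'I_n -> T) : size [seq F i | i <- enum 'I_n] = n.
  by rewrite size_map size_enum_ord.
apply: (eq_from_nth (x0 := x0)).
  by rewrite size_set_nth !size_map_enum; apply/esym/maxn_idPr.
rewrite size_map_enum => i lt_in; rewrite nth_set_nth /= -[i]/(nat_of_ord (Ordinal lt_in)).
rewrite !nth_map_enum_ord.
by rewrite -[_ == k :> nat]/(Ordinal lt_in == k); case: eqP => [-> |].
Qed.

Lemma sum_ord_delta_neg (R : zmodType) (A : nat) (a : int) (X : int -> R) :
    (absz a < A)%N -> (0 <= a -> X (- a - 1) = 0) ->
  \sum_(l < A) (if a == - l%:Z - 1 then X l%:Z else 0) = X (- a - 1).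
Proof.
case: a => [p _ X0 | m lt_mA _]; first by rewrite X0 // big1 // => l _; case: eqP => //; lia.
have lt_mA' : (m < A)%N := ltnW lt_mA.
have -> : - Negz m - 1 = m%:Z by rewrite NegzE; lia.
rewrite (bigD1 (Ordinal lt_mA')) //= big1 ?addr0 => [|l ne_lm].
  by rewrite ifT //; apply/eqP; rewrite NegzE; lia.
case: eqP => // /eqP; rewrite NegzE => eq_ml; case/eqP: ne_lm; apply: val_inj => /=.
by move: eq_ml; lia.
Qed.

Lemma psi_coef_eq0 {K : fieldType} (N : nat) (f : nat -> int -> K) (a : int) (l : nat) :
  (absz a + 2 * N <= l)%N -> psi_coef N f a l%:Z = 0.
Proof.
move=> le_Al; rewrite /psi_coef.
have -> : (a == - l%:Z - 1) = false by apply/negbTE/eqP; lia.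
have -> : (l%:Z <= (2 * N)%:Z - 2) = false by apply/negbTE; lia.
by rewrite !andbF addr0.
Qed.

Lemma sum_dpsi_coef {K : fieldType} (N : nat) (f : nat -> int -> K) (j : nat) (a : int)
    (G : int -> K) :
  \sum_(c < absz a + 2 * N) dpsi_coef N f j a c%:Z * G c%:Z =
  \sum_(l < absz a + 2 * N) psi_coef N f a l%:Z * (binz l%:Z j * G (l%:Z - j%:Z)).
Proof.
pose H l c := binz l%:Z j * psi_coef N f a l%:Z * G c%:Z.
rewrite (eq_bigr (fun c : 'I_ _ => H (c + j)%N c)); last first.
  by move=> c _; rewrite /dpsi_coef -PoszD.
rewrite sum_ord_shift => [|l c le_Al]; last by rewrite /H psi_coef_eq0 // mulr0 mul0r.
apply: eq_bigr => l _; rewrite /H mulrCA mulrA; case: leqP => [le_jl | /binz_small->].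
  by rewrite subzn.
by rewrite !mul0r.
Qed.

Section VertexOperators.
Set Implicit Arguments.
Variables (K : numClosedFieldType) (V : lmodType K) (W : VOA V).
Local Notation Y := (Y W).

Lemma Y0l n w : Y 0 n w = 0.
Proof.
have := Y_linl W 1 0 0 n w; rewrite !scale1r addr0 => Y0_double.
by apply: (@addrI _ (Y 0 n w)); rewrite addr0 -Y0_double.
Qed.

Lemma Y0r u n : Y u n 0 = 0.
Proof.
have := Y_linr W u n 1 0 0; rewrite !scale1r addr0 => Y0_double.
by apply: (@addrI _ (Y u n 0)); rewrite addr0 -Y0_double.
Qed.

Lemma YZr u n a w : Y u n (a *: w) = a *: Y u n w.
Proof. by have := Y_linr W u n a w 0; rewrite addr0 Y0r addr0. Qed.

Lemma YDr u n w w' : Y u n (w + w') = Y u n w + Y u n w'.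
Proof. by have := Y_linr W u n 1 w w'; rewrite !scale1r. Qed.

Lemma Y_sumr u n (I : Type) (r : seq I) (P : pred I) (F : I -> V) :
  Y u n (\sum_(i <- r | P i) F i) = \sum_(i <- r | P i) Y u n (F i).
Proof. exact: (big_morph (Y u n) (YDr u n) (Y0r u n)). Qed.

(* The Borcherds identity with r = 0. *)
Lemma Y_commutator (u v w : V) (m n : int) (J : nat) :
    (forall i : nat, (J <= i)%N -> Y u i%:Z v = 0) ->
  Y u m (Y v n w) = Y v n (Y u m w)
    + \sum_(i < J) binz m i *: Y (Y u i%:Z v) (m + n - i%:Z) w.
Proof.
move=> HJ; have [T1 H1] := Y_trunc W u v.
have [T2 H2] := Y_trunc W v w; have [T3 H3] := Y_trunc W u w.
pose M := (J + absz T1 + absz (T2 - n) + absz (T3 - m)).+1.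
have le_JM : (J <= M)%N by rewrite /M; lia.
have vanish i : (M <= i)%N ->
    [/\ Y u (0 + i%:Z) v = 0, Y v (n + i%:Z) w = 0 & Y u (m + i%:Z) w = 0].
  by move=> le_Mi; split; [apply: H1 | apply: H2 | apply: H3]; rewrite /M in le_Mi; lia.
have := @Borcherds _ _ W u v w m n 0 M vanish.
rewrite [X in _ = X]big_ord_recl [X in _ = _ + X]big1 => [|i _]; last first.
  by rewrite binz_small // mulr0 scale0r.
rewrite addr0 mul1r binz0 !scale1r /= !addr0 => commM.
rewrite -[Y u m _](subrK (Y v n (Y u m w))) -commM addrC; congr (_ + _).
rewrite [RHS](big_ord_widen M (fun i : nat => binz m i *: Y (Y u i%:Z v) (m + n - i%:Z) w)) //.
rewrite [RHS]big_mkcond; apply: eq_bigr => i _.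
by rewrite add0r; case: ltnP => [_ | /HJ->]; rewrite ?Y0l ?scaler0.
Qed.

Definition vac_modes (s : seq (V * int)) : V :=
  foldr (fun p acc => Y p.1 (- p.2 - 1) acc) (vac W) s.

(* Replace the k-th factor v(-b-1) of the word by (u(j) v)(-(b - c) - 1). *)
Definition apply_mode_at (u : V) (s : seq (V * int)) (k j : nat) (c : int) :=
  set_nth (0, 0) s k (Y u j%:Z (nth (0, 0) s k).1, (nth (0, 0) s k).2 - c).

Lemma Y_vac_modes (u : V) (J m : nat) (s : seq (V * int)) :
    (forall k i, (J <= i)%N -> Y u i%:Z (nth (0, 0) s k).1 = 0) ->
  Y u m%:Z (vac_modes s) =
  \sum_(k < size s) \sum_(j < J) binz m%:Z j *: vac_modes (apply_mode_at u s k j (m%:Z - j%:Z)).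
Proof.
elim: s => [_ | p s IHs HJ]; first by rewrite big_ord0 Y_create.
rewrite big_ord_recl /= (Y_commutator _ _ _ _ _ _ (HJ 0%N)) (IHs (fun k => HJ k.+1)) Y_sumr addrC.
congr (_ + _).
  by apply: eq_bigr => j _; congr (_ *: Y _ _ _); lia.
by apply: eq_bigr => k _; rewrite Y_sumr; apply: eq_bigr => j _; rewrite YZr.
Qed.

Section InvariantForm.
Variable B : V -> V -> K.
Hypothesis HB : LZ_form W B.

Lemma form0l w : B 0 w = 0.
Proof.
case: HB => linl _ _ _ _; have := linl 1 0 0 w; rewrite scale1r addr0 mul1r => B0_double.
by apply: (@addrI _ (B 0 w)); rewrite addr0 -B0_double.
Qed.

Lemma form0r w : B w 0 = 0.
Proof.
case: HB => _ linr _ _ _; have := linr 1 w 0 0; rewrite scale1r addr0 mul1r => B0_double.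
by apply: (@addrI _ (B w 0)); rewrite addr0 -B0_double.
Qed.

Lemma formZr x a y : B x (a *: y) = a * B x y.
Proof. by case: HB => _ linr _ _ _; have := linr a x y 0; rewrite addr0 form0r addr0. Qed.

Lemma form_sumr x (I : Type) (r : seq I) (P : pred I) (F : I -> V) :
  B x (\sum_(i <- r | P i) F i) = \sum_(i <- r | P i) B x (F i).
Proof.
case: HB => _ linr _ _ _; apply: (big_morph (B x) _ (form0r x)) => y y'.
by have := linr 1 x y y'; rewrite !scale1r mul1r.
Qed.

(* Invariance moves u(l) onto the vacuum as u(2N - 2 - l); for a quasiprimary u
   only the m = 0 term survives, and it kills the vacuum when 2N - 2 - l >= 0. *)
Lemma form_vac_Y_eq0 (u : V) (N : nat) : is_wt W u N -> quasiprimary W u ->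
  forall (l : int) (w : V), l <= (2 * N)%:Z - 2 -> B (vac W) (Y u l w) = 0.
Proof.
move=> u_wt u_qp l w le_l; case: HB => _ _ _ _ /(_ u N u_wt ((2 * N)%:Z - 2 - l) (vac W) w).
rewrite Y_create ?form0l; last by lia.
rewrite big_ord_recl big1 => [|i _]; last first.
  rewrite /bump /= add0n -iterS iterSr [L W 1 u]u_qp.
  have iter_L1_0 k : iter k (L W 1) 0 = 0 by elim: k => //= k ->; rewrite /L Y0r.
  by rewrite iter_L1_0 Y0l form0r mulr0.
have -> : (2 * N)%:Z - 0%N%:Z - ((2 * N)%:Z - 2 - l) - 2 = l by lia.
by rewrite addr0 fact0 invr1 mul1r => /esym/eqP; rewrite mulf_eq0 signr_eq0 => /eqP.
Qed.

Lemma psi_coef_form_vac_Y (u : V) (N : nat) : is_wt W u N -> quasiprimary W u ->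
  forall (f : nat -> int -> K) (a : int) (l : nat) (w : V),
  psi_coef N f a l%:Z * B (vac W) (Y u l%:Z w) =
  (if a == - l%:Z - 1 then B (vac W) (Y u l%:Z w) else 0).
Proof.
move=> u_wt u_qp f a l w; rewrite /psi_coef le0z_nat /= mulrDl.
have [le_l | gt_l] := boolP (l%:Z <= (2 * N)%:Z - 2).
  by rewrite (form_vac_Y_eq0 u_wt u_qp _ _ le_l) !mulr0 addr0; case: ifP.
by rewrite mul0r addr0; case: ifP; rewrite (mul1r, mul0r).
Qed.

Lemma form_vac_Y_vac_modes (u : V) (J m : nat) (s : seq (V * int)) :
    (forall k i, (J <= i)%N -> Y u i%:Z (nth (0, 0) s k).1 = 0) ->
  B (vac W) (Y u m%:Z (vac_modes s)) =
  \sum_(k < size s) \sum_(j < J)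
     binz m%:Z j * B (vac W) (vac_modes (apply_mode_at u s k j (m%:Z - j%:Z))).
Proof.
move=> HJ; rewrite (Y_vac_modes _ J) // form_sumr; apply: eq_bigr => k _.
by rewrite form_sumr; apply: eq_bigr => j _; rewrite formZr.
Qed.

End InvariantForm.
End VertexOperators.

Theorem mainTheorem2 (K : numClosedFieldType) (V : lmodType K) (W : VOA V)
  (B : V -> V -> K) (Wsimple : simpleVOA W) (HB : LZ_form W B)
  (u : V) (N : nat) (HN : (1 <= N)%N) (Hwt : is_wt W u N) (Hqp : quasiprimary W u)
  (f : nat -> int -> K) (n : nat) (v : 'I_n -> V) (J : nat)
  (HJ : forall (k : 'I_n) (j : nat), (J <= j)%N -> Y W u j%:Z (v k) = 0)
  (a : int) (b : 'I_n -> int) :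
  corr W B ((u, a) :: [seq (v i, b i) | i <- enum 'I_n]) =
  \sum_(k < n) \sum_(j < J) \sum_(c < absz a + 2 * N)
     dpsi_coef N f j a c%:Z *
     corr W B [seq (if i == k then (Y W u j%:Z (v i), b i - c%:Z) else (v i, b i))
              | i <- enum 'I_n].
Proof.
set s := [seq (v i, b i) | i <- enum 'I_n].
pose G k j c := B (vac W) (vac_modes W (apply_mode_at W u s k j c)).
have size_s : size s = n by rewrite size_map size_enum_ord.
have HJs k i : (J <= i)%N -> Y W u i%:Z (nth (0, 0) s k).1 = 0.
  move=> le_Ji; case: (ltnP k n) => [lt_kn | le_nk].
    by rewrite -[k]/(nat_of_ord (Ordinal lt_kn)) nth_map_enum_ord HJ.
  by rewrite nth_default ?size_s // Y0r.
have corr_modes (k : 'I_n) j c : corr W B [seq (if i == k then (Y W u j%:Z (v i), b i - c)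
    else (v i, b i)) | i <- enum 'I_n] = G k j c.
  by rewrite (map_enum_ord_set_nth (0, 0)) /G /apply_mode_at nth_map_enum_ord.
under eq_bigr => k _ do under eq_bigr => j _ do under eq_bigr => c _ do rewrite corr_modes.
under eq_bigr => k _ do under eq_bigr => j _ do rewrite (sum_dpsi_coef _ _ _ _ (G k j)).
under eq_bigr => k _ do rewrite exchange_big /=.
rewrite exchange_big /=.
under eq_bigr => l _ do (under eq_bigr => k _ do rewrite -mulr_sumr; rewrite -mulr_sumr).
have expand_Y (l : nat) : \sum_(k < n) \sum_(j < J) binz l%:Z j * G k j (l%:Z - j%:Z) =
    B (vac W) (Y W u l%:Z (vac_modes W s)).
  by rewrite (form_vac_Y_vac_modes HB _ _ _ _ HJs) size_s.
under eq_bigr => l _ do rewrite expand_Y (psi_coef_form_vac_Y HB Hwt Hqp).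
rewrite (sum_ord_delta_neg _ _ _ (fun l => B (vac W) (Y W u l (vac_modes W s)))) //; first by lia.
by move=> ge0_a; rewrite (form_vac_Y_eq0 HB Hwt Hqp) //; lia.
Qed.
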